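(* Let $(\Omega,\mathcal F)$ be a measurable space with $\Sigma\neq\emptyset$ and $v_0:\mathcal F\to[0,\infty)$ a non-decreasing continuous set function with $v_0(\emptyset)=0$. Suppose $v_n:\mathcal F\to[0,\infty)$, $n=0,1,2,\dots$, is a sequence of continuous set functions satisfying $v_{n+1}(A)=\sup_{\mathcal I\in\Sigma}\mu_{v_n,\mathcal I}(A)$ for all $A\in\mathcal F$ and $n\ge0$. Then for each $A\in\mathcal F$ the sequence $v_n(A)$ is non-decreasing and bounded above by $v_0(\Omega)$, hence converges; and the limit $v(A)=\lim_n v_n(A)$ is non-decreasing, submodular, satisfies $v(\emptyset)=0$, $v(\Omega)=v_0(\Omega)$, and $\lim_n v(A_n)=v(\bigcup_n A_n)$ for every sequence $A_1\subset A_2\subset\cdots$ in $\mathcal F$.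
   Context: $\Sigma$ denotes the set of all classes $\mathcal I\subset\mathcal F$ that are chains (totally ordered by inclusion), contain $\emptyset$ and $\Omega$, and generate $\mathcal F$ as a $\sigma$-algebra. $v$ is non-decreasing if $v(A)\le v(B)$ for $A\subset B$; submodular if $v(A)+v(B)\ge v(A\cup B)+v(A\cap B)$. For $\mathcal I\in\Sigma$ let $\mathcal J$ be the algebra generated by $\mathcal I$, whose elements are the sets $\bigcup_{i=1}^n (C_i\cap D_i^c)$ with $C_1\supset D_1\supset\cdots\supset C_n\supset D_n$ in $\mathcal I$; for non-decreasing $v$ define $\mu_{v,\mathcal I}(\bigcup_{i=1}^n (C_i\cap D_i^c))=\sum_{i=1}^n(v(C_i)-v(D_i))$. A set function $v$ is continuous if it is non-decreasing and, for every $\mathcal I\in\Sigma$, $\mu_{v,\mathcal I}$ is $\sigma$-additive on $\mathcal J$; then $\mu_{v,\mathcal I}$ extends uniquely to a measure on $\mathcal F$, also denoted $\mu_{v,\mathcal I}$. *)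

From HB Require Import structures.
From mathcomp Require Import all_boot all_order all_algebra.
From mathcomp Require Import all_classical all_reals all_analysis.
Set Implicit Arguments. Unset Strict Implicit. Unset Printing Implicit Defensive.
Import Order.TTheory GRing.Theory Num.Theory.
Import numFieldNormedType.Exports.
Local Open Scope classical_set_scope.
Local Open Scope ring_scope.

Section Defs.
Context {d : measure_display} {T : measurableType d} {R : realType}.

Definition InSigma (I : set (set T)) : Prop :=
  I `<=` measurable /\
  (forall A B, I A -> I B -> A `<=` B \/ B `<=` A) /\
  I set0 /\ I setT /\
  <<s I >> = measurable.

Fixpoint chain_rep (I : set (set T)) (s : seq (set T * set T)) : Prop :=
  match s with
  | [::] => True
  | (C, D) :: s' =>
      [/\ I C, I D, D `<=` C,
        (match s' with [::] => True | (C', _) :: _ => C' `<=` D end)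
        & chain_rep I s']
  end.

(* the element  \bigcup_i (C_i \cap D_i^c)  of the algebra J *)
Definition rep_set (s : seq (set T * set T)) : set T :=
  foldr (fun p A => (p.1 `\` p.2) `|` A) set0 s.

(* mu_{v,I} of that element: \sum_i (v C_i - v D_i) *)
Definition rep_val (v : set T -> R) (s : seq (set T * set T)) : R :=
  \sum_(p <- s) (v p.1 - v p.2).

Definition nondecreasing_sf (v : set T -> R) : Prop :=
  forall A B, measurable A -> measurable B -> A `<=` B -> v A <= v B.

(* mu_{v,I} is sigma-additive on J (stated on representations; this also
   contains the well-definedness of mu_{v,I}) *)
Definition sigma_additive_on_J (v : set T -> R) (I : set (set T)) : Prop :=
  forall (r : nat -> seq (set T * set T)) (s : seq (set T * set T)),
    (forall k, chain_rep I (r k)) -> chain_rep I s ->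
    trivIset setT (fun k => rep_set (r k)) ->
    \bigcup_k rep_set (r k) = rep_set s ->
    (fun n => \sum_(0 <= k < n) rep_val v (r k)) @ \oo --> rep_val v s.

Definition continuous_sf (v : set T -> R) : Prop :=
  nondecreasing_sf v /\ forall I, InSigma I -> sigma_additive_on_J v I.

(* m is the (unique, for continuous v) measure on F extending mu_{v,I} *)
Definition is_mu_ext (v : set T -> R) (I : set (set T))
    (m : {measure set T -> \bar R}) : Prop :=
  forall s, chain_rep I s -> m (rep_set s) = (rep_val v s)%:E.

Definition sup_mu (v : set T -> R) (A : set T) : \bar R :=
  ereal_sup [set x | exists I, exists m : {measure set T -> \bar R},
                       [/\ InSigma I, is_mu_ext v I m & x = m A]].

Definition submodular_sf (v : set T -> R) : Prop :=
  forall A B, measurable A -> measurable B ->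
    v A + v B >= v (A `|` B) + v (A `&` B).

End Defs.

From HB Require Import structures.
From mathcomp Require Import all_boot all_order all_algebra.
From mathcomp Require Import all_classical all_reals all_analysis.
Import Order.TTheory GRing.Theory Num.Theory.
Import numFieldNormedType.Exports.
Local Open Scope classical_set_scope.
Local Open Scope ring_scope.

Set Implicit Arguments. Unset Strict Implicit. Unset Printing Implicit Defensive.

(* For a chain [I] in [Sigma] the differences [C `\` D] of members of [I] form a
   semiring of sets on which [mu_{v,I}] is a sigma-additive premeasure (well
   defined by continuity of [v]), so Caratheodory's extension gives a measure
   [m] with [m C = v C] for every [C] in [I].  Replacing each member [B] of a
   chain by [B `&` A] and [A `|` B] yields a chain in [Sigma] containing the
   measurable set [A]; hence [v_n A <= v_(n+1) A], and inserting [A `|` B] and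
   [A `&` B] together with [m (A `|` B) + m (A `&` B) = m A + m B] gives
   [v_n (A `|` B) + v_n (A `&` B) <= v_(n+1) A + v_(n+1) B].  Since [set0] and
   [setT] lie in every chain, [v_n set0 = 0] and [v_n setT = v_0 setT].  As a
   supremum of measures, [v_(n+1)] is continuous along increasing sequences,
   and this passes to the limit [v] by exchanging two monotone limits. *)

Ltac set_tauto :=
  apply/funext => ?; apply/propext; rewrite /setD /setI /setU /setC /=; tauto.

Section chains.
Variable T : Type.
Implicit Types I : set (set T).

Definition is_chain I := forall A B, I A -> I B -> A `<=` B \/ B `<=` A.

Lemma chain_setU I A B : is_chain I -> I A -> I B -> I (A `|` B).
Proof.
by move=> chI IA IB; case: (chI A B IA IB) => ?; [rewrite setUidr|rewrite setUidl].
Qed.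

Lemma chain_setI I A B : is_chain I -> I A -> I B -> I (A `&` B).
Proof.
by move=> chI IA IB; case: (chI A B IA IB) => ?; [rewrite setIidl|rewrite setIidr].
Qed.

(* The chain condition is part of membership so that the semiring axioms below
   hold for every [I]. *)
Definition chain_diff I : set (set T) :=
  [set X | X = set0 \/ exists C D, [/\ is_chain I, I C, I D & X = C `\` D]].

Lemma chain_diff0 I : chain_diff I set0.
Proof. by left. Qed.

Lemma chain_diffI I : setI_closed (chain_diff I).
Proof.
move=> A B [->|[C1 [D1 [chI IC1 ID1 ->]]]]; first by rewrite set0I; left.
move=> [->|[C2 [D2 [_ IC2 ID2 ->]]]]; first by rewrite setI0; left.
right; exists (C1 `&` C2), (D1 `|` D2); split.
- exact: chI.
- exact: chain_setI.
- exact: chain_setU.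
- set_tauto.
Qed.

Lemma chain_diffD I : semi_setD_closed (chain_diff I).
Proof.
move=> A B [->|[C1 [D1 [chI IC1 ID1 ->]]]].
  exists set0; split; [exact: finite_set0|by []| |by move=> ? ? []].
  by rewrite set0D bigcup_set0.
move=> [->|[C2 [D2 [_ IC2 ID2 ->]]]].
  exists [set C1 `\` D1]; split.
  - exact: finite_set1.
  - by move=> X ->; right; exists C1, D1.
  - by rewrite setD0 bigcup_set1.
  - by move=> X Y -> ->.
set X1 := C1 `\` (D1 `|` C2); set X2 := (C1 `&` (C2 `&` D2)) `\` D1.
exists ([set X1] `|` [set X2]); split.
- by rewrite finite_setU; split; exact: finite_set1.
- move=> X [->|->]; right.
  + by exists C1, (D1 `|` C2); split => //; exact: chain_setU.
  + by exists (C1 `&` (C2 `&` D2)), D1; split => //; do 2 apply: chain_setI => //.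
- rewrite bigcup_setU !bigcup_set1 /X1 /X2; apply/funext => x; apply/propext.
  have := pselect (C2 x); have := pselect (D2 x); have := pselect (D1 x).
  rewrite /setD /setI /setU /setC /=; tauto.
- by move=> X Y [->|->] [->|->] // [x []]; rewrite /X1 /X2 /setD /setI /setU /=; tauto.
Qed.

End chains.

Definition chain_space (T : pointedType) (I : set (set T)) : Type := T.

HB.instance Definition _ (T : pointedType) (I : set (set T)) :=
  Pointed.on (chain_space I).
HB.instance Definition _ (T : pointedType) (I : set (set T)) :=
  @isSemiRingOfSets.Build default_measure_display (@chain_space T I) (chain_diff I)
    (chain_diff0 I) (@chain_diffI T I) (@chain_diffD T I).

Section representations.
Context {d : measure_display} {T : measurableType d} {R : realType}.
Implicit Types (I : set (set T)) (v : set T -> R) (s : seq (set T * set T)).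

Lemma rep_val_nil v : rep_val v [::] = 0.
Proof. by rewrite /rep_val big_nil. Qed.

Lemma rep_val_cons v C D s : rep_val v ((C, D) :: s) = (v C - v D) + rep_val v s.
Proof. by rewrite /rep_val big_cons. Qed.

Lemma rep_set_tail_sub I C D s : chain_rep I ((C, D) :: s) -> rep_set s `<=` D.
Proof.
elim: s C D => [|[C' D'] s IH] C D; first by move=> *.
move=> [_ _ _ C'D chs'] /=; have [_ _ D'C' _ _] := chs'; rewrite subUset; split.
  exact: subset_trans (@subDsetl _ C' D') C'D.
exact: subset_trans (IH C' D' chs') (subset_trans D'C' C'D).
Qed.

Lemma measurable_rep_set I s : I `<=` measurable -> chain_rep I s ->
  measurable (rep_set s).
Proof.
move=> Im; elim: s => [|[C D] s IH]; first by move=> _; exact: measurable0.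
by move=> [IC ID _ _ chs] /=; apply: measurableU (IH chs); apply: measurableD; exact: Im.
Qed.

Lemma rep_val_ge0 I v s : nondecreasing_sf v -> I `<=` measurable ->
  chain_rep I s -> 0 <= rep_val v s.
Proof.
move=> ndv Im; elim: s => [|[C D] s IH]; first by rewrite rep_val_nil.
move=> [IC ID DC _ chs]; rewrite rep_val_cons addr_ge0 ?IH // subr_ge0.
by apply: ndv => //; exact: Im.
Qed.

(* Well-definedness of [mu_{v,I}]: the sigma-additivity hypothesis applied to
   the one-term sequence [s, [::], [::], ...]. *)
Lemma rep_val_unique I v s s' : continuous_sf v -> InSigma I ->
  chain_rep I s -> chain_rep I s' -> rep_set s = rep_set s' ->
  rep_val v s = rep_val v s'.
Proof.
move=> [_ sav] HI chs chs' ss'.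
pose r k : seq (set T * set T) := if k is 0%N then s else [::].
have chr k : chain_rep I (r k) by case: k.
have tr : trivIset setT (fun k => rep_set (r k)) by move=> [|i] [|j] _ _ // [x []].
have Ur : \bigcup_k rep_set (r k) = rep_set s'.
  by rewrite -ss'; apply/seteqP; split=> [x [[|k] _ //]|x sx]; exists 0%N.
have partial_sums_s : (fun n => \sum_(0 <= k < n) rep_val v (r k)) @ \oo --> rep_val v s.
  apply: cvg_near_cst; exists 1%N => // [[|n]] // _.
  by rewrite big_nat_recl // big1 ?addr0 // => k _; exact: rep_val_nil.
exact: cvg_unique _ partial_sums_s (sav I HI r s' chr chs' tr Ur).
Qed.

Lemma chain_diff_rep I X : chain_diff I X ->
  exists s, chain_rep I s /\ rep_set s = X.
Proof.
move=> [->|[C [D [chI IC ID ->]]]]; first by exists [::].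
exists [:: (C, C `&` D)]; split; first by split => //; exact: chain_setI.
rewrite /= setU0; set_tauto.
Qed.

End representations.

(* [mu_{v,I}] on the semiring [chain_diff I]; the value [0] outside the
   intended situation only serves to make the measure axioms unconditional. *)
Definition chain_premeasure d (T : measurableType d) (R : realType) (v : set T -> R)
    (I : set (set T)) : set (chain_space I) -> \bar R := fun X =>
  if pselect (continuous_sf v /\ InSigma I /\
              exists s, chain_rep I s /\ rep_set s = X) is left h
  then (rep_val v (sval (cid h.2.2)))%:E else 0%E.
Arguments chain_premeasure {d T R} v I.

Section premeasure.
Context {d : measure_display} {T : measurableType d} {R : realType}.
Implicit Types (I : set (set T)) (v : set T -> R) (s : seq (set T * set T)).

Lemma chain_premeasureE v I s : continuous_sf v -> InSigma I -> chain_rep I s ->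
  chain_premeasure v I (rep_set s) = (rep_val v s)%:E.
Proof.
move=> cv HI chs; rewrite /chain_premeasure; case: pselect => [h|[]]; last first.
  by split=> //; split=> //; exists s.
case: cid => s0 [chs0 e] /=; congr _%:E; exact: (rep_val_unique cv HI chs0 chs e).
Qed.

Lemma chain_premeasure_degenerate v I X : ~ (continuous_sf v /\ InSigma I) ->
  chain_premeasure v I X = 0%E.
Proof.
move=> nh; rewrite /chain_premeasure; case: pselect => // h.
by case: nh; case: h => cv [].
Qed.

Lemma chain_premeasure0 v I : chain_premeasure v I set0 = 0%E.
Proof.
have [[cv HI]|nh] := pselect (continuous_sf v /\ InSigma I); last first.
  exact: chain_premeasure_degenerate.
by rewrite -[set0]/(rep_set [::]) chain_premeasureE // rep_val_nil.
Qed.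

Lemma chain_premeasure_ge0 v I X : (0 <= chain_premeasure v I X)%E.
Proof.
rewrite /chain_premeasure; case: pselect => // -[cv [HI ex]]; case: cid => s /= [chs _].
by rewrite lee_fin (rep_val_ge0 cv.1 HI.1).
Qed.

Lemma chain_premeasure_semi_sigma_additive v I :
  semi_sigma_additive (chain_premeasure v I).
Proof.
move=> F mF tF mU.
have [[cv HI]|nh] := pselect (continuous_sf v /\ InSigma I); last first.
  rewrite chain_premeasure_degenerate //; apply: cvg_near_cst; apply: nearW => n.
  by apply: big1 => i _; exact: chain_premeasure_degenerate.
have /choice [r rF] i : exists s, chain_rep I s /\ rep_set s = F i.
  exact: chain_diff_rep (mF i).
have [s [chs sU]] := chain_diff_rep mU; rewrite -sU chain_premeasureE //.
have -> : (fun n => \sum_(0 <= i < n) chain_premeasure v I (F i))%E =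
          (fun n => (\sum_(0 <= i < n) rep_val v (r i))%:E).
  apply/funext => n; rewrite -sumEFin; apply: eq_bigr => i _.
  by rewrite -(rF i).2 chain_premeasureE //; exact: (rF i).1.
apply/cvg_EFin; first exact: nearW.
apply: (cv.2 I HI r s) => //; first by move=> k; exact: (rF k).1.
- by move=> i j _ _; rewrite !(rF _).2; exact: tF.
- by rewrite sU; apply: eq_bigcupr => k _; exact: (rF k).2.
Qed.

End premeasure.

HB.instance Definition _ d (T : measurableType d) (R : realType) v I :=
  isMeasure.Build _ _ R (@chain_premeasure d T R v I) (@chain_premeasure0 d T R v I)
    (@chain_premeasure_ge0 d T R v I) (@chain_premeasure_semi_sigma_additive d T R v I).

Section extension.
Context {d : measure_display} {T : measurableType d} {R : realType}.
Implicit Types (I : set (set T)) (v : set T -> R) (s : seq (set T * set T)).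

Lemma sub_chain_diff I : InSigma I -> I `<=` chain_diff I.
Proof. by move=> [_ [chI [I0 _]]] C IC; right; exists C, set0; rewrite setD0. Qed.

Lemma measurable_sigma_chain_diff I A : InSigma I -> measurable A ->
  <<s chain_diff I >> A.
Proof.
by move=> HI; rewrite -HI.2.2.2.2; apply: sub_sigma_algebra2; exact: sub_chain_diff.
Qed.

(* The extension lives on [<<s chain_diff I >>], which contains the measurable
   sets of [T] when [I] is in [Sigma]. *)
Definition chain_measure v I (A : set T) : \bar R :=
  if pselect (InSigma I) is left _ then measure_extension (chain_premeasure v I) A
  else 0%E.

Lemma chain_measure0 v I : chain_measure v I set0 = 0%E.
Proof. by rewrite /chain_measure; case: pselect => // _; exact: measure0. Qed.

Lemma chain_measure_ge0 v I A : (0 <= chain_measure v I A)%E.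
Proof. by rewrite /chain_measure; case: pselect => // _; exact: measure_ge0. Qed.

Lemma chain_measure_semi_sigma_additive v I : semi_sigma_additive (chain_measure v I).
Proof.
move=> F mF tF mU; rewrite /chain_measure; case: pselect => [HI|_]; last first.
  by apply: cvg_near_cst; apply: nearW => n; exact: big1.
apply: (measure_semi_sigma_additive (s := measure_extension (chain_premeasure v I))).
- by move=> i; exact: measurable_sigma_chain_diff.
- exact: tF.
- exact: measurable_sigma_chain_diff.
Qed.

End extension.

HB.instance Definition _ d (T : measurableType d) (R : realType) v I :=
  isMeasure.Build d T R (@chain_measure d T R v I) (@chain_measure0 d T R v I)
    (@chain_measure_ge0 d T R v I) (@chain_measure_semi_sigma_additive d T R v I).

Section mu_ext.
Context {d : measure_display} {T : measurableType d} {R : realType}.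
Implicit Types (I : set (set T)) (v : set T -> R) (s : seq (set T * set T)).

Lemma chain_measure_diff v I C D : continuous_sf v -> InSigma I ->
  I C -> I D -> D `<=` C -> chain_measure v I (C `\` D) = (v C - v D)%:E.
Proof.
move=> cv HI IC ID DC; rewrite /chain_measure; case: pselect => // _.
rewrite /measure_extension measurable_mu_extE; last first.
  by right; exists C, D; split => //; exact: HI.2.1.
have chCD : chain_rep I [:: (C, D)] by split.
move: (chain_premeasureE cv HI chCD).
by rewrite rep_val_cons rep_val_nil addr0 /= setU0.
Qed.

Lemma chain_measure_is_mu_ext v I : continuous_sf v -> InSigma I ->
  is_mu_ext v I (chain_measure v I).
Proof.
move=> cv HI; elim => [|[C D] s IH]; first by rewrite rep_val_nil measure0.
move=> chCDs; have [IC ID DC _ chs] := chCDs.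
rewrite /= rep_val_cons EFinD -(IH chs) -(chain_measure_diff cv HI IC ID DC).
apply: measureU.
- by apply: measurableD; exact: HI.1.
- exact: measurable_rep_set HI.1 chs.
- by apply/seteqP; split => // x [[_ nDx] /(rep_set_tail_sub chCDs)].
Qed.

Lemma exists_mu_ext v I : continuous_sf v -> InSigma I ->
  exists m : {measure set T -> \bar R}, is_mu_ext v I m.
Proof. by move=> cv HI; exists (chain_measure v I); exact: chain_measure_is_mu_ext. Qed.

End mu_ext.

Section chain_insert.
Context {d : measure_display} {T : measurableType d}.
Implicit Types (I : set (set T)) (A B : set T).

Definition chain_insert A I : set (set T) :=
  [set X | exists2 B, I B & X = B `&` A \/ X = A `|` B].

Lemma chain_insert_self A I : I setT -> chain_insert A I A.
Proof. by exists setT => //; left; rewrite setTI. Qed.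

Lemma chain_insert_setU A B I : I B -> chain_insert A I (A `|` B).
Proof. by exists B => //; right. Qed.

Lemma is_chain_insert A I : is_chain I -> is_chain (chain_insert A I).
Proof.
move=> chI _ _ [B1 IB1 [->|->]] [B2 IB2 [->|->]].
- by case: (chI _ _ IB1 IB2) => ?; [left|right]; apply: setSI.
- by left => x [_ ?]; left.
- by right => x [_ ?]; left.
- by case: (chI _ _ IB1 IB2) => ?; [left|right]; apply: setUS.
Qed.

Lemma chain_insert_sub_measurable A I : measurable A -> I `<=` measurable ->
  chain_insert A I `<=` measurable.
Proof.
move=> mA Im _ [B IB [->|->]]; first by apply: measurableI => //; exact: Im.
by apply: measurableU => //; exact: Im.
Qed.

Lemma InSigma_chain_insert A I : measurable A -> InSigma I -> InSigma (chain_insert A I).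
Proof.
move=> mA [Im [chI [I0 [IT genI]]]]; split; [|split; [|split; [|split]]].
- exact: chain_insert_sub_measurable.
- exact: is_chain_insert.
- by exists set0 => //; left; rewrite set0I.
- by exists setT => //; right; rewrite setUT.
apply/seteqP; split.
  apply: smallest_sub; first exact: sigma_algebra_measurable.
  exact: chain_insert_sub_measurable.
rewrite -genI; apply: smallest_sub; first exact: smallest_sigma_algebra.
move=> B IB; pose M := g_sigma_algebraType (chain_insert A I).
have sBA : <<s chain_insert A I >> (B `&` A).
  by apply: sub_sigma_algebra; exists B => //; left.
have sAB : <<s chain_insert A I >> (A `|` B).
  by apply: sub_sigma_algebra; exists B => //; right.
have sA : <<s chain_insert A I >> A by apply: sub_sigma_algebra; exact: chain_insert_self.
have -> : B = (B `&` A) `|` ((A `|` B) `\` A).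
  apply/funext => x; apply/propext; have := pselect (A x).
  rewrite /setD /setI /setU /=; tauto.
exact: (@measurableU _ M _ _ sBA (@measurableD _ M _ _ sAB sA)).
Qed.

End chain_insert.

Lemma measureUI d (T : measurableType d) (R : realType) (mu : {measure set T -> \bar R})
    (A B : set T) : measurable A -> measurable B ->
  (mu (A `|` B) + mu (A `&` B) = mu A + mu B)%E.
Proof.
move=> mA mB; rewrite (measureDI mu (measurableU _ _ mA mB) mA) (measureDI mu mB mA).
have -> : (A `|` B) `\` A = B `\` A by set_tauto.
have -> : (A `|` B) `&` A = A by set_tauto.
by rewrite (setIC B A) addeA (addeC (mu A)).
Qed.

Section monotone_limits.
Variable R : realType.
Implicit Types (u : R ^nat) (a : nat -> R ^nat).

Lemma nondecreasing_cvg_le u l : nondecreasing_seq u -> u @ \oo --> l ->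
  forall n, u n <= l.
Proof.
move=> ndu ul n; rewrite -(cvg_lim _ ul) //.
exact: nondecreasing_cvgn_le ndu (cvgP _ ul) n.
Qed.

Lemma nondecreasing_bounded_cvgn u b : nondecreasing_seq u -> (forall n, u n <= b) ->
  cvgn u.
Proof. by move=> ndu ub; apply: nondecreasing_is_cvgn ndu _; exists b => _ [n _ <-]. Qed.

Lemma cvg_monotone_exchange a (b c : R ^nat) (L : R) :
  (forall n, nondecreasing_seq (a n)) -> (forall k, nondecreasing_seq (a^~ k)) ->
  (forall n, a n @ \oo --> b n) -> (forall k, a^~ k @ \oo --> c k) ->
  b @ \oo --> L -> c @ \oo --> L.
Proof.
move=> nd_k nd_n ab ac bL.
have a_le_b n k : a n k <= b n := nondecreasing_cvg_le (nd_k n) (ab n) k.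
have a_le_c n k : a n k <= c k := nondecreasing_cvg_le (nd_n k) (ac k) n.
have c_le_L k : c k <= L by apply: ler_cvg_to (ac k) bL _; apply: nearW.
have nd_c : nondecreasing_seq c.
  apply/nondecreasing_seqP => k; apply: ler_cvg_to (ac k) (ac k.+1) _.
  by apply: nearW => n; exact: nd_k.
have cc := nondecreasing_bounded_cvgn nd_c c_le_L.
suff <- : limn c = L by [].
apply/eqP; rewrite eq_le; apply/andP; split.
  by apply: limr_le => //; exact: nearW.
apply: ler_cvg_to bL (cvg_cst _) _; apply: nearW => n.
by apply: ler_cvg_to (ab n) cc _; apply: nearW.
Qed.

End monotone_limits.

Section sup_mu.
Context {d : measure_display} {T : measurableType d} {R : realType}.
Implicit Types (I : set (set T)) (v : set T -> R) (m : {measure set T -> \bar R}).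

Lemma mu_ext_le_sup_mu v I m A : InSigma I -> is_mu_ext v I m ->
  (m A <= sup_mu v A)%E.
Proof. by move=> HI mI; apply: ereal_sup_ubound; exists I, m. Qed.

Lemma mu_ext_chain v I m C : v set0 = 0 -> I set0 -> I C -> is_mu_ext v I m ->
  m C = (v C)%:E.
Proof.
move=> v0 I0 IC mI; have chC : chain_rep I [:: (C, set0)] by split.
by move: (mI _ chC); rewrite /= setU0 setD0 rep_val_cons rep_val_nil v0 !subr0 addr0.
Qed.

Lemma sup_mu_le v A B : measurable A -> measurable B -> A `<=` B ->
  (sup_mu v A <= sup_mu v B)%E.
Proof.
move=> mA mB AB; apply: ge_ereal_sup => _ [I [m [HI mI ->]]].
apply: le_trans (mu_ext_le_sup_mu B HI mI).
by apply: le_measure AB; rewrite inE.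
Qed.

Section continuous.
Variables (v : set T -> R) (I0 : set (set T)).
Hypotheses (cv : continuous_sf v) (v0 : v set0 = 0) (HI0 : InSigma I0).

Lemma sup_mu_in_every_chain X : (forall I, InSigma I -> I X) -> sup_mu v X = (v X)%:E.
Proof.
move=> XI; rewrite /sup_mu -[RHS]ereal_sup1; congr ereal_sup.
apply/seteqP; split=> [_ [I [m [HI mI ->]]]|_ ->] /=.
  exact: mu_ext_chain HI.2.2.1 (XI I HI) mI.
have [m mI0] := exists_mu_ext cv HI0.
by exists I0, m; split=> //; rewrite (mu_ext_chain v0 HI0.2.2.1 (XI I0 HI0) mI0).
Qed.

Lemma le_sup_mu A : measurable A -> ((v A)%:E <= sup_mu v A)%E.
Proof.
move=> mA; have HI := InSigma_chain_insert mA HI0.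
have [m mI] := exists_mu_ext cv HI.
rewrite -(mu_ext_chain v0 HI.2.2.1 (chain_insert_self A HI0.2.2.2.1) mI).
exact: mu_ext_le_sup_mu HI mI.
Qed.

Lemma sup_mu_submodular A B : measurable A -> measurable B ->
  ((v (A `|` B) + v (A `&` B))%:E <= sup_mu v A + sup_mu v B)%E.
Proof.
move=> mA mB; have mAUB := measurableU _ _ mA mB; have mAIB := measurableI _ _ mA mB.
have HI1 := InSigma_chain_insert mAUB HI0.
pose I := chain_insert (A `&` B) (chain_insert (A `|` B) I0).
have HI : InSigma I := InSigma_chain_insert mAIB HI1.
have IAIB : I (A `&` B) := chain_insert_self _ HI1.2.2.2.1.
have IAUB : I (A `|` B).
  have -> : A `|` B = (A `&` B) `|` (A `|` B) by apply/esym/setUidr => x [? _]; left.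
  exact/chain_insert_setU/chain_insert_self/HI0.2.2.2.1.
have [m mI] := exists_mu_ext cv HI.
rewrite EFinD -(mu_ext_chain v0 HI.2.2.1 IAUB mI) -(mu_ext_chain v0 HI.2.2.1 IAIB mI).
by rewrite measureUI //; apply: leeD; exact: mu_ext_le_sup_mu HI mI.
Qed.

End continuous.

Lemma sup_mu_cvg v (w : set T -> R) (A : nat -> set T) :
  (forall X, measurable X -> (w X)%:E = sup_mu v X) ->
  (forall k, measurable (A k)) -> (forall k, A k `<=` A k.+1) ->
  (w \o A) @ \oo --> w (\bigcup_k A k).
Proof.
move=> wE mA incA; have mU : measurable (\bigcup_k A k) := bigcupT_measurable _ mA.
have w_le X Y : measurable X -> measurable Y -> X `<=` Y -> w X <= w Y.
  by move=> mX mY XY; rewrite -lee_fin !wE //; exact: sup_mu_le.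
have AU k : A k `<=` \bigcup_k A k by move=> x Akx; exists k.
have ndwA : nondecreasing_seq (w \o A).
  by apply/nondecreasing_seqP => k; exact: w_le (mA k) (mA k.+1) (incA k).
have cwA : cvgn (w \o A).
  exact: nondecreasing_bounded_cvgn ndwA (fun k => w_le _ _ (mA k) mU (AU k)).
suff <- : limn (w \o A) = w (\bigcup_k A k) by [].
apply/eqP; rewrite eq_le; apply/andP; split.
  by apply: limr_le => //; apply: nearW => k; exact: w_le.
rewrite -lee_fin wE //; apply: ge_ereal_sup => _ [I [m [HI mI ->]]].
have ndA : nondecreasing_seq A by apply/nondecreasing_seqP => k; rewrite subsetEset.
apply: cvge_le (nondecreasing_cvg_mu mA mU ndA); apply: nearW => k /=.
apply: le_trans (mu_ext_le_sup_mu _ HI mI) _; rewrite -wE // lee_fin.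
exact: nondecreasing_cvgn_le.
Qed.

End sup_mu.

Section iteration.
Context {d : measure_display} {T : measurableType d} {R : realType}.
Variables (v : nat -> set T -> R) (I0 : set (set T)).
Hypotheses (HI0 : InSigma I0) (v00 : v 0%N set0 = 0)
  (cont : forall n, continuous_sf (v n))
  (rec : forall n A, measurable A -> ((v n.+1 A)%:E = sup_mu (v n) A)%E).

Lemma iter_set0 n : v n set0 = 0.
Proof.
elim: n => // n IH; apply/EFin_inj; rewrite rec //.
by rewrite (sup_mu_in_every_chain (cont n) IH HI0) ?IH // => I HI; exact: HI.2.2.1.
Qed.

Lemma iter_setT n : v n setT = v 0%N setT.
Proof.
elim: n => // n IH; rewrite -IH; apply/EFin_inj; rewrite rec //.
rewrite (sup_mu_in_every_chain (cont n) (iter_set0 n) HI0) //.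
by move=> I HI; exact: HI.2.2.2.1.
Qed.

Lemma iter_le_succ n A : measurable A -> v n A <= v n.+1 A.
Proof.
by move=> mA; rewrite -lee_fin rec //; exact: (le_sup_mu (cont n) (iter_set0 n) HI0 mA).
Qed.

Lemma iter_le_setT n A : measurable A -> v n A <= v 0%N setT.
Proof. by move=> mA; rewrite -(iter_setT n); exact: (cont n).1. Qed.

Lemma iter_nondecreasing A : measurable A -> nondecreasing_seq (v^~ A).
Proof. by move=> mA; apply/nondecreasing_seqP => n; exact: iter_le_succ. Qed.

Lemma iter_cvg A : measurable A -> cvgn (v^~ A).
Proof.
move=> mA; apply: nondecreasing_bounded_cvgn (iter_nondecreasing mA) _ => n.
exact: iter_le_setT.
Qed.

Lemma iter_succ_cvg A : measurable A -> (fun n => v n.+1 A) @ \oo --> limn (v^~ A).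
Proof. by move=> mA; rewrite (cvg_shiftS (v^~ A)); exact: iter_cvg. Qed.

Lemma lim_iter_nondecreasing : nondecreasing_sf (fun A => limn (v^~ A)).
Proof.
move=> A B mA mB AB; apply: ler_lim (iter_cvg mA) (iter_cvg mB) _.
by apply: nearW => n; exact: (cont n).1.
Qed.

Lemma lim_iter_submodular : submodular_sf (fun A => limn (v^~ A)).
Proof.
move=> A B mA mB; have mAUB := measurableU _ _ mA mB; have mAIB := measurableI _ _ mA mB.
apply: ler_cvg_to (cvgD (iter_cvg mAUB) (iter_cvg mAIB))
  (cvgD (iter_succ_cvg mA) (iter_succ_cvg mB)) _.
apply: nearW => n /=; rewrite -lee_fin !EFinD !rec //.
exact: (sup_mu_submodular (cont n) (iter_set0 n) HI0 mA mB).
Qed.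

Lemma lim_iter_set0 : limn (v^~ set0) = 0.
Proof. by apply: cvg_lim => //; apply: cvg_near_cst; exact: nearW iter_set0. Qed.

Lemma lim_iter_setT : limn (v^~ setT) = v 0%N setT.
Proof. by apply: cvg_lim => //; apply: cvg_near_cst; exact: nearW iter_setT. Qed.

Lemma lim_iter_cvg (A : nat -> set T) : (forall k, measurable (A k)) ->
  (forall k, A k `<=` A k.+1) ->
  (fun k => limn (v^~ (A k))) @ \oo --> limn (v^~ (\bigcup_k A k)).
Proof.
move=> mA incA; have mU : measurable (\bigcup_k A k) := bigcupT_measurable _ mA.
apply: (@cvg_monotone_exchange _ (fun n k => v n.+1 (A k))
  (fun n => v n.+1 (\bigcup_k A k))).
- by move=> n; apply/nondecreasing_seqP => k; exact: (cont n.+1).1.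
- by move=> k; apply/nondecreasing_seqP => n; exact: iter_le_succ.
- by move=> n; apply: sup_mu_cvg (rec n) mA incA.
- by move=> k; exact: iter_succ_cvg.
- exact: iter_succ_cvg.
Qed.

End iteration.

Theorem proposition20 (d : measure_display) (T : measurableType d) (R : realType)
    (v : nat -> set T -> R) :
  (exists I : set (set T), InSigma I) ->
  (forall n A, measurable A -> 0 <= v n A) ->
  v 0%N set0 = 0 ->
  (forall n, continuous_sf (v n)) ->
  (forall n A, measurable A -> ((v n.+1 A)%:E = sup_mu (v n) A)%E) ->
  (forall A, measurable A ->
     (forall n, v n A <= v n.+1 A) /\ (forall n, v n A <= v 0%N setT) /\
     cvg (v^~ A @ \oo)) /\
  (let vl := fun A => lim (v^~ A @ \oo) in
   [/\ nondecreasing_sf vl, submodular_sf vl, vl set0 = 0,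
       vl setT = v 0%N setT &
       forall A : nat -> set T, (forall n, measurable (A n)) ->
         (forall n, A n `<=` A n.+1) ->
         (vl \o A) @ \oo --> vl (\bigcup_n A n)]).
Proof.
move=> [I0 HI0] _ v00 cont rec; split=> [A mA|vl].
  split; [|split].
  - by move=> n; exact: (iter_le_succ HI0 v00 cont rec n mA).
  - by move=> n; exact: (iter_le_setT HI0 v00 cont rec n mA).
  - exact: (iter_cvg HI0 v00 cont rec mA).
split.
- exact: (lim_iter_nondecreasing HI0 v00 cont rec).
- exact: (lim_iter_submodular HI0 v00 cont rec).
- exact: (lim_iter_set0 HI0 v00 cont rec).
- exact: (lim_iter_setT HI0 v00 cont rec).
- exact: (lim_iter_cvg HI0 v00 cont rec).
Qed.
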